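(* Let $\mathcal{M}=\langle W,V\rangle$ be a model, $X\subseteq W$ an information state, and $q,p_1,\dots,p_n$ propositional variables. Then $q$ depends on $p_1,\dots,p_n$ in $X$ if and only if, for any $w\in W$, $$\mathcal{M},w,X\vDash \Big(\bigwedge_{1\leq i\leq n}(\Box p_i\vee\Box\neg p_i)\Big)\Rightarrow(\Box q\vee\Box\neg q)$$ according to the Kolodny–MacFarlane semantics.
   Context: Formulas are built by $\varphi::= p\mid \neg\varphi\mid (\varphi\wedge\varphi)\mid \Box\varphi \mid (\varphi\Rightarrow\varphi)$, with $\vee$ defined as usual. A model is $\mathcal{M}=\langle W,V\rangle$ with $W$ nonempty and $V$ assigning each propositional variable a subset of $W$. The Kolodny–MacFarlane semantics evaluates at $\mathcal{M},w,X$ with $w\in W$, $X\subseteq W$: $\mathcal{M},w,X\vDash p$ iff $w\in V(p)$; $\neg,\wedge$ Boolean; $\mathcal{M},w,X\vDash\Box\varphi$ iff $\mathcal{M},v,X\vDash\varphi$ for all $v\in X$; $\mathcal{M},w,X\vDash\varphi\Rightarrow\psi$ iff $\mathcal{M},w,X'\vDash\Box\psi$ for every $X'$ such that (i) $X'\subseteq X$, (ii) $X'\subseteq\llbracket\varphi\rrbracket^{\mathcal{M},X'}$, and (iii) there is no $X''$ satisfying (i) and (ii) with $X'\subsetneq X''$; here $\llbracket\varphi\rrbracket^{\mathcal{M},Y}=\{v\in Y\mid\mathcal{M},v,Y\vDash\varphi\}$. In an information state $X$, $q$ depends on $p_1,\dots,p_n$ iff any two worlds in $X$ that agree on the truth values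 of $p_1,\dots,p_n$ also agree on the truth value of $q$. *)

From Stdlib Require Import List.
Import ListNotations.

Inductive form : Type :=
| Var : nat -> form
| Neg : form -> form
| And : form -> form -> form
| Box : form -> form
| Imp : form -> form -> form.

Definition Or (a b : form) : form := Neg (And (Neg a) (Neg b)).

Record model : Type := Model {
  world : Type;
  val : nat -> world -> Prop;
  world_nonempty : inhabited world
}.

Definition state (M : model) := world M -> Prop.

Definition subset {T : Type} (A B : T -> Prop) : Prop := forall x, A x -> B x.
Definition psubset {T : Type} (A B : T -> Prop) : Prop :=
  subset A B /\ ~ subset B A.

Fixpoint sat (M : model) (phi : form) (w : world M) (X : state M) {struct phi} : Prop :=
  match phi with
  | Var p => val M p w
  | Neg a => ~ sat M a w X
  | And a b => sat M a w X /\ sat M b w X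
  | Box a => forall v, X v -> sat M a v X
  | Imp a b =>
      let ok := fun Y : state M =>
                  subset Y X /\ (forall v, Y v -> sat M a v Y) in
      forall X' : state M,
        ok X' ->
        (~ exists X'' : state M, ok X'' /\ psubset X' X'') ->
        (* M, w, X' |= Box b *)
        forall v, X' v -> sat M b v X'
  end.

Definition ext (M : model) (phi : form) (Y : state M) : state M :=
  fun v => Y v /\ sat M phi v Y.

Definition Top : form := Neg (And (Var 0) (Neg (Var 0))).
Fixpoint bigand (l : list form) : form :=
  match l with
  | [] => Top
  | [a] => a
  | a :: l' => And a (bigand l')
  end.

Definition depends (M : model) (X : state M) (q : nat) (ps : list nat) : Prop :=
  forall w1 w2, X w1 -> X w2 ->
    (forall p, In p ps -> (val M p w1 <-> val M p w2)) ->
    (val M q w1 <-> val M q w2).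

Definition decided (p : nat) : form := Or (Box (Var p)) (Box (Neg (Var p))).

(* Both sides of the implication in the formula are insensitive to the world of
   evaluation: [Box p \/ Box ~p] holds in a state iff [p] is constant on it.
   So the formula says that [q] is constant on every maximal substate of [X]
   on which all the [p_i] are constant.  These maximal substates are exactly
   the classes of worlds of [X] agreeing on all the [p_i], and [q] is constant
   on each class iff it depends on the [p_i]. *)
From Stdlib Require Import List Classical.
Import ListNotations.

Definition constant_on (M : model) (p : nat) (Y : state M) : Prop :=
  forall x y, Y x -> Y y -> (val M p x <-> val M p y).

Definition agree_class (M : model) (X : state M) (ps : list nat) (w : world M)
  : state M :=
  fun x => X x /\ forall p, In p ps -> (val M p x <-> val M p w).

Lemma sat_decided (M : model) (p : nat) (v : world M) (Y : state M) :
  sat M (decided p) v Y <-> constant_on M p Y.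
Proof.
  simpl; split.
  - intros Hdec x y Yx Yy.
    destruct (classic (forall z, Y z -> val M p z)) as [Hall | Hnall].
    + split; intros _; apply Hall; assumption.
    + assert (Hnone : forall z, Y z -> ~ val M p z).
      { apply NNPP; intros Hsome; apply Hdec; split; assumption. }
      split; intros Hp; exfalso; [apply (Hnone x) | apply (Hnone y)]; assumption.
  - intros Hconst [Hnall Hnnone].
    apply Hnnone; intros x Yx Px.
    apply Hnall; intros y Yy.
    apply (Hconst x y); assumption.
Qed.

Lemma sat_bigand (M : model) (l : list form) (v : world M) (Y : state M) :
  sat M (bigand l) v Y <-> (forall a, In a l -> sat M a v Y).
Proof.
  induction l as [| a l IH].
  - simpl; tauto.
  - destruct l as [| b l].
    + simpl; split; [intros H c [<- | []] | intros H; apply H; left]; auto.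
    + change (sat M a v Y /\ sat M (bigand (b :: l)) v Y
              <-> (forall c, In c (a :: b :: l) -> sat M c v Y)).
      rewrite IH; simpl; firstorder congruence.
Qed.

Lemma sat_bigand_decided (M : model) (ps : list nat) (v : world M) (Y : state M) :
  sat M (bigand (map decided ps)) v Y <-> (forall p, In p ps -> constant_on M p Y).
Proof.
  rewrite sat_bigand; split.
  - intros H p Hp; apply (sat_decided M p v), H, in_map, Hp.
  - intros H a Ha; apply in_map_iff in Ha as [p [<- Hp]].
    apply sat_decided, H, Hp.
Qed.

Lemma sat_bigand_decided_constant_on (M : model) (ps : list nat) (Y : state M) :
  (forall v, Y v -> sat M (bigand (map decided ps)) v Y) ->
  forall p, In p ps -> constant_on M p Y.
Proof.
  intros HY p Hp x y Yx Yy.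
  apply (proj1 (sat_bigand_decided M ps x Y) (HY x Yx) p Hp); assumption.
Qed.

Lemma depends_constant_on (M : model) (X Y : state M) (q : nat) (ps : list nat) :
  depends M X q ps -> subset Y X ->
  (forall p, In p ps -> constant_on M p Y) -> constant_on M q Y.
Proof.
  intros Hdep HYX Hps x y Yx Yy.
  apply Hdep; [apply HYX; assumption | apply HYX; assumption |].
  intros p Hp; apply (Hps p Hp); assumption.
Qed.

Lemma agree_class_self (M : model) (X : state M) (ps : list nat) (w : world M) :
  X w -> agree_class M X ps w w.
Proof. split; [assumption | tauto]. Qed.

Lemma constant_on_agree_class (M : model) (X : state M) (ps : list nat)
  (w : world M) (p : nat) :
  In p ps -> constant_on M p (agree_class M X ps w).
Proof.
  intros Hp x y [_ Hx] [_ Hy].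
  rewrite (Hx p Hp), (Hy p Hp); reflexivity.
Qed.

Lemma agree_class_maximal (M : model) (X Z : state M) (ps : list nat) (w : world M) :
  subset Z X -> (forall p, In p ps -> constant_on M p Z) -> Z w ->
  subset Z (agree_class M X ps w).
Proof.
  intros HZX Hps Zw x Zx; split.
  - apply HZX, Zx.
  - intros p Hp; apply (Hps p Hp); assumption.
Qed.

Theorem proposition11 (M : model) (X : state M) (q : nat) (ps : list nat) :
  depends M X q ps <->
  (forall w : world M,
     sat M (Imp (bigand (map decided ps)) (decided q)) w X).
Proof.
  split.
  - intros Hdep w Y [HYX HY] _ v _.
    apply sat_decided, (depends_constant_on M X Y q ps), sat_bigand_decided_constant_on;
      assumption.
  - intros Himp w1 w2 Xw1 Xw2 Hagree.
    set (Y := agree_class M X ps w1).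
    assert (HY : forall v, Y v -> sat M (bigand (map decided ps)) v Y).
    { intros v _; apply sat_bigand_decided; intros p Hp.
      apply constant_on_agree_class, Hp. }
    assert (Hmax : ~ exists Z : state M,
               (subset Z X /\ (forall v, Z v -> sat M (bigand (map decided ps)) v Z))
               /\ psubset Y Z).
    { intros [Z [[HZX HZ] [HYZ HZY]]].
      apply HZY, agree_class_maximal; [assumption | |].
      - apply sat_bigand_decided_constant_on, HZ.
      - apply HYZ, agree_class_self, Xw1. }
    assert (Yw2 : Y w2) by (split; [assumption | intros p Hp; symmetry; apply Hagree, Hp]).
    assert (Hq := Himp w1 Y (conj (fun v Yv => proj1 Yv) HY) Hmax w1
                       (agree_class_self M X ps w1 Xw1)).
    apply sat_decided in Hq.
    apply Hq; [apply agree_class_self, Xw1 | exact Yw2].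
Qed.
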